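(* Let $q,d\ge1$ and $\mathcal{D}=\{(b_{\lambda_1},B_{\lambda_1}),\ldots,(b_{\lambda_d},B_{\lambda_d})\}\subseteq[q]\times2^{[q]}$ with $|B_{\lambda_i}|\ge2$ for all $i$. Let $B$ be a nonempty subset of $[q]$, $b\in{\sf Base}(\mathcal{D})$, and $T_{(b,B)}$ the $\mathcal{D}$-decision tree relative to $(b,B)$. If $b'$ is the label of a good vertex of even height of $T_{(b,B)}$, then $(b',B)\in\overline{\mathcal{D}}$.
   Context: Here $\lambda_1,\dots,\lambda_d$ are $d$ distinct index symbols, ${\sf Base}(\mathcal{D})=\{b_{\lambda_1},\dots,b_{\lambda_d}\}$, and for $b'\in{\sf Base}(\mathcal{D})$, $\nu(b')=\{\lambda_i:i\in[d],\ b_{\lambda_i}=b'\}$. Closure: with $\Lambda=[q]$, $(c,C)^{\sf ex}=\{(c,C'):C\subseteq C'\subseteq\Lambda\}$; $(c,C)\circ(e,E)=(c,(C\smallsetminus\{e\})\cup E)$; $\mathcal{D}^\circ$ is the set of all compositions $(c_1,C_1)\circ\cdots\circ(c_s,C_s)$, $s\ge1$, $(c_i,C_i)\in\mathcal{D}$, with all possible bracketings; $\mathcal{D}^{\sf ex}$ the union of extensions of elements of $\mathcal{D}$; $\Lambda^{\sf triv}=\{(c,C):c\in C\}$; $\overline{\mathcal{D}}=(\mathcal{D}^\circ)^{\sf ex}\cup\Lambda^{\sf triv}$. Decision tree $T_{(b,B)}$: a rooted labeled tree built as follows. The root (height $0$) is labeled $b$. For $k=1,2,\ldots$: every vertex of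 height $2k-2$, with label $b'\in{\sf Base}(\mathcal{D})$, receives one child labeled $\lambda_i$ for each $\lambda_i\in\nu(b')$; then every vertex $v$ of height $2k-1$, with label $\lambda_i$, is treated as follows, where $C(v)$ is the set of labels of the ancestors of $v$ of even height: if $\emptyset\ne B_{\lambda_i}\smallsetminus B\subseteq{\sf Base}(\mathcal{D})\smallsetminus C(v)$, $v$ receives one child labeled $b''$ for each $b''\in B_{\lambda_i}\smallsetminus B$; otherwise $v$ is a leaf. (The process terminates; all leaves have odd height.) Good/bad vertices, defined from the leaves upward: a leaf labeled $\lambda_i$ is good iff $B_{\lambda_i}\subseteq B$; a vertex of even height is good iff at least one of its children is good; a non-leaf vertex of odd height is good iff all its children are good. Vertices that are not good are bad. *)

(* [q] = {1,...,q} is represented by 'I_q = {0,...,q-1};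
   the index symbols lambda_1..lambda_d by 'I_d. The family D is given by
   bD : 'I_d -> 'I_q (b_{lambda_i}) and BD : 'I_d -> {set 'I_q} (B_{lambda_i}). *)
From mathcomp Require Import all_boot.
Set Implicit Arguments. Unset Strict Implicit. Unset Printing Implicit Defensive.

Section Closure.
Variables (q d : nat) (bD : 'I_d -> 'I_q) (BD : 'I_d -> {set 'I_q}).

Definition Base : {set 'I_q} := [set bD i | i : 'I_d].

Definition compose (x y : 'I_q * {set 'I_q}) : 'I_q * {set 'I_q} :=
  (x.1, (x.2 :\ y.1) :|: y.2).

(* D^o : all compositions of >= 1 elements of D, with all bracketings
   (= closure of D under the binary operation o). *)
Inductive Dcirc : 'I_q * {set 'I_q} -> Prop :=
  | Dcirc_base i : Dcirc (bD i, BD i)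
  | Dcirc_comp x y : Dcirc x -> Dcirc y -> Dcirc (compose x y).

Definition in_ext (x y : 'I_q * {set 'I_q}) : Prop :=
  y.1 = x.1 /\ x.2 \subset y.2.

Definition Dbar (y : 'I_q * {set 'I_q}) : Prop :=
  (exists2 x, Dcirc x & in_ext x y) \/ y.1 \in y.2.

(* An even-height vertex (height 2k) is encoded by
   its path from the root: the list [(i1,c1);...;(ik,ck)] of labels
   lambda_{i_j} (odd heights) and c_j (even heights) along the path.
   The odd-height vertex with label lambda_i, child of the even vertex p,
   is encoded by (p, i). *)
Variables (b : 'I_q) (B : {set 'I_q}).

Definition path_t := seq ('I_d * 'I_q).

Definition lbl (p : path_t) : 'I_q := last b (map snd p).

(* C(v) for the odd vertex (p,i): labels of its even-height ancestors *)
Definition Cset (p : path_t) : {set 'I_q} := b |: [set x | x \in map snd p].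

(* the odd vertex (p,i) is not a leaf *)
Definition expandable (p : path_t) (i : 'I_d) : bool :=
  (BD i :\: B != set0) && (BD i :\: B \subset Base :\: Cset p).

Inductive is_even_vertex : path_t -> Prop :=
  | EV_root : is_even_vertex [::]
  | EV_step p i c : is_even_vertex p -> bD i = lbl p -> expandable p i ->
      c \in BD i :\: B -> is_even_vertex (rcons p (i, c)).

(* good vertices, defined from the leaves upward (the tree is finite, so the
   inductive (least) definition coincides with the recursive one). *)
Inductive good_even : path_t -> Prop :=
  | GE p i : bD i = lbl p -> good_odd p i -> good_even p
with good_odd : path_t -> 'I_d -> Prop :=
  | GO_leaf p i : ~~ expandable p i -> BD i \subset B -> good_odd p i
  | GO_node p i : expandable p i ->
      (forall c, c \in BD i :\: B -> good_even (rcons p (i, c))) ->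
      good_odd p i.

End Closure.

(* A good vertex is witnessed by an element of D^o whose head is its label and
   whose tail lies inside B.  At a good leaf lambda_i this is (b_i, B_i) itself.
   At a good inner vertex lambda_i every child c in B_i \ B is good, so c heads
   such a witness; composing (b_i, B_i) successively with these witnesses trades
   each c for a subset of B, leaving a tail inside B.  An even vertex inherits
   the witness of a good child. *)
From mathcomp Require Import all_boot.

Set Implicit Arguments.
Unset Strict Implicit.
Unset Printing Implicit Defensive.

Scheme good_even_mut_ind := Induction for good_even Sort Prop
with good_odd_mut_ind := Induction for good_odd Sort Prop.
Combined Scheme good_mut_ind from good_even_mut_ind, good_odd_mut_ind.

Section GoodWitness.
Variables (q d : nat) (bD : 'I_d -> 'I_q) (BD : 'I_d -> {set 'I_q}).
Variable B : {set 'I_q}.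

Definition Dcirc_within (c : 'I_q) : Prop :=
  exists2 z, Dcirc bD BD z & z.1 = c /\ z.2 \subset B.

Lemma Dcirc_compose_seq (s : seq 'I_q) (x : 'I_q * {set 'I_q}) :
  Dcirc bD BD x -> {in s, forall c, Dcirc_within c} ->
  exists2 z, Dcirc bD BD z &
    z.1 = x.1 /\ z.2 \subset (x.2 :\: [set c in s]) :|: B.
Proof.
elim: s x => [|c s IHs] x Dx s_within.
  exists x => //; split => //; apply/subsetP => e xe.
  by rewrite in_setU in_setD inE xe.
have [y Dy [y1 yB]] := s_within c (mem_head c s).
have [|z Dz [z1 zsub]] := IHs _ (Dcirc_comp Dx Dy).
  by move=> c' c's; apply: s_within; rewrite in_cons c's orbT.
exists z => //; split => //; apply: (subset_trans zsub).
apply/subsetP => e; rewrite /compose /= !(in_setU, in_setD, inE) -y1.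
case eB: (e \in B); rewrite ?orbT //= orbF.
case/andP=> /negbTE -> /orP[/andP[/negbTE -> ->] // | ey].
by move/subsetP: yB => /(_ e ey); rewrite eB.
Qed.

Lemma Dcirc_within_compose (x : 'I_q * {set 'I_q}) :
  Dcirc bD BD x -> {in x.2 :\: B, forall c, Dcirc_within c} ->
  Dcirc_within x.1.
Proof.
move=> Dx within.
have [|z Dz [z1 zsub]] := Dcirc_compose_seq (s := enum (x.2 :\: B)) Dx.
  by move=> c; rewrite mem_enum; apply: within.
exists z => //; split => //; apply: (subset_trans zsub).
apply/subsetP => e; rewrite set_enum !(in_setU, in_setD).
by case: (e \in B); rewrite ?orbT //= orbF andNb.
Qed.

Variable b : 'I_q.

Lemma good_Dcirc_within :
  (forall p, good_even bD BD b B p -> Dcirc_within (lbl b p)) /\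
  (forall p i, good_odd bD BD b B p i -> Dcirc_within (bD i)).
Proof.
pose Pe p (_ : good_even bD BD b B p) := Dcirc_within (lbl b p).
pose Po p i (_ : good_odd bD BD b B p i) := Dcirc_within (bD i).
apply: (@good_mut_ind q d bD BD b B Pe Po); rewrite /Pe /Po.
- by move=> p i <-.
- by move=> p i _ sub; exists (bD i, BD i) => //; exact: Dcirc_base.
- move=> p i _ _ children; apply: (Dcirc_within_compose (Dcirc_base bD BD i)).
  by move=> c /children; rewrite /lbl map_rcons last_rcons.
Qed.

End GoodWitness.

Theorem lemma3p8 (q d : nat) (bD : 'I_d -> 'I_q) (BD : 'I_d -> {set 'I_q})
  (hq : 0 < q) (hd : 0 < d)
  (hBD : forall i : 'I_d, 2 <= #|BD i|)
  (B : {set 'I_q}) (hB : B != set0)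
  (b : 'I_q) (hb : b \in Base bD)
  (p : path_t q d) :
  is_even_vertex bD BD b B p -> good_even bD BD b B p ->
  Dbar bD BD (lbl b p, B).
Proof.
move=> _ /(proj1 (good_Dcirc_within bD BD B b)) [z Dz [z1 zB]].
by left; exists z.
Qed.
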